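(* Let $q$ be a prime power, let $l\ge 1$ and $r_1,\ldots,r_l\ge 1$ be integers, let $\alpha_1,\ldots,\alpha_l$ be pairwise distinct elements of $\mathbb{F}_q^*$, and let $\gamma\in\mathbb{F}_q$. Consider the system in the $r_1+\cdots+r_l$ unknowns $x^{(i)}_j$ ($1\le i\le l$, $1\le j\le r_i$) over $\mathbb{F}_q$: $$\sum_{i=1}^l\sum_{j=1}^{r_i}x^{(i)}_j=\gamma,\qquad \sum_{i=1}^l\alpha_i\sum_{j=1}^{r_i}x^{(i)}_j=0,\qquad \prod_{i,j}x^{(i)}_j\neq 0.$$ For $l=1$ the number of solutions is $A_{r_1}=\psi_{r_1}$ if $\gamma=0$ and $0$ if $\gamma\ne 0$. For $l>1$ the number of solutions is $A_{r_1,\ldots,r_l}$ if $\gamma=0$ and $(\psi_{r_1+\cdots+r_l}-A_{r_1,\ldots,r_l})/(q-1)$ if $\gamma\neq 0$, where $A_{r_1,\ldots,r_l}$ is defined recursively by $$A_{r_1}=\psi_{r_1},\qquad A_{r_1,\ldots,r_l}=\psi_{r_1+\cdots+r_{l-1}}\varphi_{r_l}+(-1)^{r_l}A_{r_1,\ldots,r_{l-1}}.$$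
   Context: For an integer $m\ge 0$, $\psi_m$ denotes the number of $(x_1,\ldots,x_m)\in\mathbb{F}_q^m$ with $\sum_{i=1}^m x_i=0$ and all $x_i\ne 0$, and $\varphi_m$ denotes the number of $(x_1,\ldots,x_m)\in\mathbb{F}_q^m$ with $\sum_{i=1}^m x_i=1$ and all $x_i\neq 0$ (so $\psi_0=1$, $\varphi_0=0$). *)

From HB Require Import structures.
From mathcomp Require Import all_boot all_order all_algebra.
Set Implicit Arguments. Unset Strict Implicit. Unset Printing Implicit Defensive.
Import Order.TTheory GRing.Theory Num.Theory.
Local Open Scope ring_scope.

Definition psi (F : finFieldType) (m : nat) : nat :=
  #|[set x : {ffun 'I_m -> F} | (\sum_(i < m) x i == 0) && [forall i, x i != 0]]|.

Definition phi (F : finFieldType) (m : nat) : nat :=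
  #|[set x : {ffun 'I_m -> F} | (\sum_(i < m) x i == 1) && [forall i, x i != 0]]|.

(* A on the REVERSED list [:: r_l; r_{l-1}; ...; r_1]:
   A_{r1} = psi r1,  A_{r1..rl} = psi(r1+..+r_{l-1}) phi(r_l) + (-1)^{r_l} A_{r1..r_{l-1}} *)
Fixpoint Arev (F : finFieldType) (s : seq nat) : int :=
  match s with
  | [::] => 0
  | [:: x] => (psi F x)%:Z
  | x :: s' => (psi F (sumn s'))%:Z * (phi F x)%:Z + (-1) ^+ x * Arev F s'
  end.

Definition A (F : finFieldType) (r : seq nat) : int := Arev F (rev r).

(* index type of the unknowns x^{(i)}_j, 1<=i<=l, 1<=j<=r_i (0-based here) *)
Definition unk (r : seq nat) : finType := {i : 'I_(size r) & 'I_(nth 0%N r i)}.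

Definition unk_at (r : seq nat) (i : 'I_(size r)) (j : 'I_(nth 0%N r i)) : unk r :=
  @Tagged 'I_(size r) i (fun i : 'I_(size r) => 'I_(nth 0%N r i)) j.

Definition sols (F : finFieldType) (r : seq nat) (alpha : 'I_(size r) -> F)
    (gamma : F) : {set {ffun unk r -> F}} :=
  [set x : {ffun unk r -> F} |
    [&& \sum_(i < size r) \sum_(j < nth 0%N r i) x (unk_at j) == gamma,
        \sum_(i < size r) alpha i * \sum_(j < nth 0%N r i) x (unk_at j) == 0
      & [forall k, x k != 0]]].

From HB Require Import structures.
From mathcomp Require Import all_boot all_order all_algebra ring.
Set Implicit Arguments. Unset Strict Implicit. Unset Printing Implicit Defensive.
Import Order.TTheory GRing.Theory Num.Theory.
Local Open Scope ring_scope.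

(* Classify vectors by their support.  Among the x supported exactly on D, those
   with sum_k c_k x_k = t (c nonzero on D) number psi_|D| if t = 0 and phi_|D|
   otherwise, and adding one coordinate shows psi_m - phi_m = (-1)^m.  Now add a
   block J, on which alpha is a constant a_J, to the coordinates D of the earlier
   blocks, and write a solution as x + y with supp x = D, supp y = J.  The system
   becomes: sum y = - sum x, and sum_D (alpha_k - a_J) x_k = 0.  As the alpha_i are
   distinct, the x satisfying the second condition number psi_|D|, and each has
   phi_|J| + (-1)^|J| [sum x = 0] completions y; this is the recursion defining A.  For gamma <> 0, scaling shows
   that the count does not depend on gamma, and summing over gamma counts the
   solutions of the second equation alone, psi_(r_1 + ... + r_l). *)

Lemma card_in_bij (T U : finType) (A : {set T}) (B : {set U}) (f : T -> U) (g : U -> T) :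
  {in A, forall x, f x \in B} -> {in B, forall y, g y \in A} ->
  {in A, cancel f g} -> {in B, cancel g f} -> #|A| = #|B|.
Proof.
move=> fAB gBA fK gK; rewrite -(card_in_imset (can_in_inj fK)).
apply: eq_card => y; apply/imsetP/idP=> [[x xA ->] | yB]; first exact: fAB.
by exists (g y); rewrite ?gK ?gBA.
Qed.

Lemma sum_nat_card (T : finType) (P b : pred T) :
  (\sum_(x | P x) b x)%N = #|[set x | P x && b x]|.
Proof. by rewrite -sum1dep_card big_mkcondr; apply: eq_bigr => x _; case: (b x). Qed.

Section Support.
Variables (F : finFieldType) (I : finType).
Implicit Types (D J : {set I}) (x y : {ffun I -> F}) (c : I -> F) (t : F).

Definition has_support D x := [forall k, (x k != 0) == (k \in D)].

Lemma has_supportP D x : reflect (forall k, (x k != 0) = (k \in D)) (has_support D x).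
Proof. by apply: (iffP forallP) => xD k; [exact: eqP (xD k) | rewrite xD]. Qed.

Lemma has_support_out D x k : has_support D x -> k \notin D -> x k = 0.
Proof. by move=> /has_supportP/(_ k) <- /negPn/eqP. Qed.

Lemma has_support_in D x k : has_support D x -> k \in D -> x k != 0.
Proof. by move=> /has_supportP/(_ k) ->. Qed.

Lemma has_support0 x : has_support set0 x = (x == 0).
Proof.
apply/has_supportP/eqP => [x0 | -> k]; last by rewrite ffunE eqxx inE.
by apply/ffunP=> k; rewrite ffunE; apply/eqP/negbNE; rewrite x0 inE.
Qed.

Lemma has_supportT x : has_support setT x = [forall k, x k != 0].
Proof. by apply: eq_forallb => k; rewrite inE eqb_id. Qed.

Lemma sum_has_support D x c :
  has_support D x -> \sum_k c k * x k = \sum_(k in D) c k * x k.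
Proof.
move=> xD; rewrite (bigID (mem D)) /= [X in _ + X]big1 ?addr0 // => k kD.
by rewrite (has_support_out xD kD) mulr0.
Qed.

Lemma sum_has_support_const D c cD x : has_support D x ->
  {in D, forall k, c k = cD} -> \sum_k c k * x k = cD * \sum_k x k.
Proof.
move=> xD cE; rewrite mulr_sumr; apply: eq_bigr => k _.
by have [/cE -> // | kD] := boolP (k \in D); rewrite (has_support_out xD kD) !mulr0.
Qed.

Lemma has_support_scale D u x :
  u != 0 -> has_support D [ffun k => u * x k] = has_support D x.
Proof. by move=> u0; apply: eq_forallb => k; rewrite ffunE mulf_eq0 negb_or u0. Qed.

Lemma card_has_supportU D J (P : pred {ffun I -> F}) : [disjoint D & J] ->
  #|[set x | has_support (D :|: J) x && P x]| =
  (\sum_(x | has_support D x) #|[set y | has_support J y && P (x + y)%R]|)%N.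
Proof.
move=> dDJ; under eq_bigr do rewrite -sum1_card.
rewrite pair_big_dep sum1dep_card.
pose res x := [ffun k => if k \in D then x k else 0].
have DJ k : k \in D -> k \notin J by move=> kD; rewrite (disjointFr dDJ kD).
apply: (card_in_bij (f := fun x => (res x, x - res x)) (g := fun p => p.1 + p.2)).
- move=> x; rewrite !inE /= => /andP[/has_supportP xDJ Px].
  rewrite subrKC Px andbT; apply/andP; split; apply/has_supportP => k.
    by rewrite ffunE; case: ifP => [kD | _]; rewrite ?xDJ ?inE ?kD ?eqxx.
  rewrite !ffunE; case: ifPn => [kD | kD]; first by rewrite subrr eqxx (negbTE (DJ k kD)).
  by rewrite subr0 xDJ inE (negbTE kD).
- move=> [x y]; rewrite !inE /= => /andP[xD /andP[yJ ->]]; rewrite andbT.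
  apply/has_supportP => k; rewrite ffunE inE.
  have [kD | kD] := boolP (k \in D).
    by rewrite (has_support_out yJ (DJ k kD)) addr0 (has_support_in xD).
  by rewrite (has_support_out xD kD) add0r; move/has_supportP: yJ.
- by move=> x _; rewrite /= subrKC.
- move=> [x y]; rewrite !inE /= => /andP[xD /andP[yJ _]].
  have -> : res (x + y) = x.
    apply/ffunP=> k; rewrite !ffunE; case: ifPn => [kD | kD].
      by rewrite (has_support_out yJ (DJ k kD)) addr0.
    by rewrite (has_support_out xD kD).
  by rewrite addrC addKr.
Qed.

Lemma card_lin_tuple D c t u : u != 0 -> {in D, forall k, c k != 0} ->
  #|[set x | has_support D x && (\sum_k c k * x k == t)]| =
  #|[set y : {ffun 'I_#|D| -> F} | (\sum_i y i == u * t) && [forall i, y i != 0]]|.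
Proof.
move=> u0 c0; pose ev := @enum_val I (mem D).
have evD i : ev i \in D by apply: enum_valP.
have pick_in k : k \in D -> exists2 i, ev i = k & [pick i | ev i == k] = Some i.
  move=> kD; case: pickP => [i /eqP <- | noi]; first by exists i.
  by have := noi (enum_rank_in kD k); rewrite /ev enum_rankK_in ?eqxx.
have pick_out k : k \notin D -> [pick i | ev i == k] = None.
  by move=> kD; case: pickP => // i /eqP eik; have := evD i; rewrite eik (negbTE kD).
have pick_ev i : [pick j | ev j == ev i] = Some i.
  by case: pickP => [j /eqP /enum_val_inj -> // | noj]; have := noj i; rewrite eqxx.
have ucD i : u * c (ev i) != 0 by rewrite mulf_neq0 ?c0.
pose f x := [ffun i : 'I_#|D| => u * c (ev i) * x (ev i)].
pose g (y : {ffun 'I_#|D| -> F}) :=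
  [ffun k => if [pick i | ev i == k] is Some i then y i / (u * c k) else 0].
have sum_f x : has_support D x -> \sum_i f x i = u * \sum_k c k * x k.
  move=> xD; rewrite (sum_has_support _ xD) (big_enum_val (fun k => c k * x k)) mulr_sumr.
  by apply: eq_bigr => i _; rewrite ffunE mulrA.
have gK : cancel g f by move=> y; apply/ffunP => i; rewrite !ffunE pick_ev mulrC divfK.
have g_supp (y : {ffun 'I_#|D| -> F}) : [forall i, y i != 0] -> has_support D (g y).
  move=> /forallP y0; apply/has_supportP => k; rewrite ffunE.
  have [kD | kD] := boolP (k \in D); last by rewrite pick_out ?eqxx.
  by have [i <- ->] := pick_in k kD; rewrite mulf_neq0 ?invr_eq0.
apply: (card_in_bij (f := f) (g := g)).
- move=> x; rewrite !inE => /andP[xD /eqP <-]; rewrite sum_f // eqxx /=.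
  by apply/forallP => i; rewrite ffunE mulf_neq0 // (has_support_in xD).
- move=> y; rewrite !inE => /andP[/eqP sy y0]; rewrite g_supp //=.
  by rewrite -(inj_eq (mulfI u0)) -sum_f ?g_supp // gK sy.
- move=> x; rewrite inE => /andP[xD _]; apply/ffunP => k; rewrite !ffunE.
  have [kD | kD] := boolP (k \in D); last by rewrite pick_out // (has_support_out xD kD).
  by have [i <- ->] := pick_in k kD; rewrite ffunE mulrC mulKf.
- by move=> y _; apply: gK.
Qed.

Lemma card_lin_psi D c : {in D, forall k, c k != 0} ->
  #|[set x | has_support D x && (\sum_k c k * x k == 0)]| = psi F #|D|.
Proof. by move=> c0; rewrite (@card_lin_tuple _ _ _ 1) ?oner_neq0 // mulr0. Qed.

Lemma card_lin_phi D c t : t != 0 -> {in D, forall k, c k != 0} ->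
  #|[set x | has_support D x && (\sum_k c k * x k == t)]| = phi F #|D|.
Proof. by move=> t0 c0; rewrite (@card_lin_tuple _ _ _ t^-1) ?invr_eq0 // mulVf. Qed.

Lemma card_has_support0 (P : pred {ffun I -> F}) :
  #|[set x | has_support set0 x && P x]| = P 0.
Proof.
rewrite -(big_pred1_eq addn (0 : {ffun I -> F}) (fun x => P x : nat)) sum_nat_card.
by apply: eq_card => x; rewrite !inE has_support0.
Qed.

Lemma card_has_support1 k s :
  #|[set y | has_support [set k] y && (y k == s)]| = (s != 0).
Proof.
have [-> | s0] := eqVneq s 0.
  apply/eqP; rewrite cards_eq0; apply/eqP/setP => y; rewrite !inE.
  by apply/negbTE/andP => -[/has_support_in/(_ (set11 k))/negPf ->].
apply/eqP/cards1P; exists [ffun j => if j == k then s else 0].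
apply/setP => y; rewrite !inE; apply/andP/eqP => [[yk /eqP <-] | ->].
  apply/ffunP => j; rewrite ffunE; case: eqVneq => [-> // | jk].
  by rewrite (has_support_out yk) // inE.
rewrite ffunE eqxx; split => //; apply/has_supportP => j.
by rewrite ffunE inE; case: (j == k); rewrite ?s0 ?eqxx.
Qed.

Definition nsum D t := #|[set x | has_support D x && (\sum_k x k == t)]|.

Lemma nsum_psi D : nsum D 0 = psi F #|D|.
Proof.
rewrite /nsum -(@card_lin_psi D (fun=> 1)) => [|k _]; last exact: oner_neq0.
by apply: eq_card => x; rewrite !inE; under [\sum_k 1 * _]eq_bigr do rewrite mul1r.
Qed.

Lemma nsum_phi D t : t != 0 -> nsum D t = phi F #|D|.
Proof.
move=> t0; rewrite /nsum -(@card_lin_phi D (fun=> 1) t t0) => [|k _]; last exact: oner_neq0.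
by apply: eq_card => x; rewrite !inE; under [\sum_k 1 * _]eq_bigr do rewrite mul1r.
Qed.

Lemma nsum_set1U D k t : k \notin D ->
  (nsum (k |: D) t + nsum D t)%N = #|[set x | has_support D x]|.
Proof.
move=> kD; rewrite /nsum setUC card_has_supportU; last by rewrite disjoint_sym disjoints1.
have fiber x : has_support D x ->
    #|[set y | has_support [set k] y && (\sum_j (x + y) j == t)]| = (\sum_j x j != t).
  move=> xD; rewrite [in RHS]eq_sym -[in RHS]subr_eq0 -(card_has_support1 k).
  apply: eq_card => y; rewrite !inE; apply: andb_id2l => yk.
  have sum_y : \sum_j y j = y k.
    by rewrite (bigD1 k) //= big1 ?addr0 // => j jk; rewrite (has_support_out yk) ?inE.
  have -> : \sum_j (x + y) j = \sum_j x j + y k.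
    by rewrite -sum_y -big_split; apply: eq_bigr => j _; rewrite ffunE.
  by rewrite [RHS]eq_sym subr_eq eq_sym addrC.
pose At := [set x : {ffun I -> F} | \sum_j x j == t].
rewrite (eq_bigr _ fiber) sum_nat_card -(cardsID At [set x | has_support D x]) addnC.
by congr (_ + _)%N; apply: eq_card => x; rewrite !inE andbC.
Qed.

Lemma nsum_set0 t : nsum set0 t = (t == 0).
Proof. by rewrite /nsum card_has_support0 /= big1 ?(eq_sym 0) // => k _; rewrite ffunE. Qed.

Lemma nsum_alt D : (nsum D 0)%:Z - (nsum D 1)%:Z = (-1) ^+ #|D|.
Proof.
move: {2}#|D| (erefl #|D|) => n; elim: n D => [|n IH] D cardD.
  by move/eqP: cardD; rewrite cards_eq0 => /eqP ->; rewrite !nsum_set0 eqxx oner_eq0 cards0.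
have [k kD] : exists k, k \in D by apply/set0Pn; rewrite -card_gt0 cardD.
have kD' : k \notin D :\ k by rewrite setD11.
have nsumD t : (nsum D t)%:Z = #|[set x | has_support (D :\ k) x]|%:Z - (nsum (D :\ k) t)%:Z.
  by rewrite -(nsum_set1U t kD') setD1K // PoszD addrK.
have cardD' : #|D :\ k| = n by move: cardD; rewrite (cardsD1 k D) kD => -[].
by rewrite !nsumD cardD exprS -cardD' -(IH _ cardD'); ring.
Qed.

Lemma nsumE D t : (nsum D t)%:Z = (phi F #|D|)%:Z + (-1) ^+ #|D| *+ (t == 0).
Proof.
have [-> | t0] := eqVneq t 0; last by rewrite nsum_phi //= mulr0n addr0.
by rewrite -nsum_alt (nsum_phi D (oner_neq0 F)) /= mulr1n addrC subrK.
Qed.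

End Support.

Lemma psi_phi (F : finFieldType) m : (psi F m)%:Z = (phi F m)%:Z + (-1) ^+ m.
Proof. by have := @nsumE F 'I_m setT 0; rewrite nsum_psi cardsT card_ord eqxx mulr1n. Qed.

Section Systems.
Variables (F : finFieldType) (I : finType) (a : I -> F).
Implicit Types (D J : {set I}) (x y : {ffun I -> F}) (g : F).

Definition nsols D g :=
  #|[set x | has_support D x && ((\sum_k x k == g) && (\sum_k a k * x k == 0))]|.

Lemma nsols_set0 : nsols set0 0 = 1%N.
Proof. by rewrite /nsols card_has_support0 /= !big1 ?eqxx // => k _; rewrite ffunE ?mulr0. Qed.

Lemma sum_coefB al x :
  \sum_k (a k - al) * x k = \sum_k a k * x k - al * \sum_k x k.
Proof. by rewrite mulr_sumr -sumrB; apply: eq_bigr => k _; rewrite mulrBl. Qed.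

Lemma fiber_eq J al x y : {in J, forall k, a k = al} -> has_support J y ->
  (\sum_k (x + y) k == 0) && (\sum_k a k * (x + y) k == 0) =
  (\sum_k (a k - al) * x k == 0) && (\sum_k y k == - \sum_k x k).
Proof.
move=> aJ yJ; have sum_ay := sum_has_support_const yJ aJ.
have -> : \sum_k (x + y) k = \sum_k x k + \sum_k y k.
  by rewrite -big_split; apply: eq_bigr => k _; rewrite ffunE.
have -> : \sum_k a k * (x + y) k = \sum_k a k * x k + al * \sum_k y k.
  by rewrite -sum_ay -big_split; apply: eq_bigr => k _; rewrite ffunE mulrDr.
rewrite sum_coefB; set sx := \sum_k x k; set sy := \sum_k y k.
have [-> | ne] := eqVneq sy (- sx); first by rewrite subrr eqxx mulrN andbT.
by rewrite [sx + sy]addrC addr_eq0 (negbTE ne) andbF.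
Qed.

Lemma card_fiber J al x : {in J, forall k, a k = al} ->
  #|[set y | has_support J y &&
      ((\sum_k (x + y) k == 0) && (\sum_k a k * (x + y) k == 0))]| =
  if \sum_k (a k - al) * x k == 0 then nsum J (- \sum_k x k) else 0%N.
Proof.
move=> aJ; case: eqVneq => [w0 | w0].
  by apply: eq_card => y; rewrite !inE; apply: andb_id2l => yJ; rewrite (fiber_eq x aJ yJ) w0 eqxx.
apply/eqP; rewrite cards_eq0; apply/eqP/setP => y; rewrite !inE.
by apply/negbTE/andP => -[yJ]; rewrite (fiber_eq x aJ yJ) (negbTE w0).
Qed.

Lemma nsols_setU D J al : [disjoint D & J] ->
    {in J, forall k, a k = al} -> {in D, forall k, a k != al} ->
  (nsols (D :|: J) 0)%:Z =
    (psi F #|D|)%:Z * (phi F #|J|)%:Z + (-1) ^+ #|J| * (nsols D 0)%:Z.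
Proof.
move=> dDJ aJ aD; pose w x := \sum_k (a k - al) * x k.
have fiber x (_ : has_support D x) : #|[set y | has_support J y &&
      ((\sum_k (x + y) k == 0) && (\sum_k a k * (x + y) k == 0))]| =
    if w x == 0 then nsum J (- \sum_k x k) else 0%N by exact: card_fiber.
have term x : (if w x == 0 then nsum J (- \sum_k x k) else 0%N)%:Z =
    (phi F #|J|)%:Z *+ (w x == 0) + (-1) ^+ #|J| *+ ((w x == 0) && (\sum_k x k == 0)).
  by case: (w x == 0); rewrite ?mulr0n ?addr0 // nsumE oppr_eq0.
have card_w : #|[set x | has_support D x && (w x == 0)]| = psi F #|D|.
  by apply: card_lin_psi => k kD; rewrite subr_eq0 aD.
have card_w_sum :
    #|[set x | has_support D x && ((w x == 0) && (\sum_k x k == 0))]| = nsols D 0.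
  apply: eq_card => x; rewrite !inE; apply: andb_id2l => _; rewrite /w sum_coefB andbC.
  by have [-> | _] := eqVneq (\sum_k x k) 0; rewrite ?mulr0 ?subr0.
rewrite /nsols card_has_supportU // (eq_bigr _ fiber) -natz natr_sum.
under eq_bigr => x _ do rewrite natz term.
rewrite big_split /= sumrMnr sum_nat_card sumrMnr sum_nat_card card_w card_w_sum.
by rewrite -/(nsols D 0); ring.
Qed.

Lemma nsols_scale D g : g != 0 -> nsols D g = nsols D 1.
Proof.
move=> g0; pose scale c x := [ffun k : I => c * x k].
have sum_scale c (b : I -> F) x : \sum_k b k * scale c x k = c * \sum_k b k * x k.
  by rewrite mulr_sumr; apply: eq_bigr => k _; rewrite ffunE mulrCA.
have sum1_scale c x : \sum_k scale c x k = c * \sum_k x k.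
  by rewrite mulr_sumr; apply: eq_bigr => k _; rewrite ffunE.
apply: (card_in_bij (f := scale g^-1) (g := scale g)) => x; rewrite !inE.
- rewrite has_support_scale ?invr_eq0 // sum1_scale sum_scale => /andP[-> /andP[/eqP -> /eqP ->]].
  by rewrite mulVf ?mulr0 ?eqxx.
- rewrite has_support_scale // sum1_scale sum_scale => /andP[-> /andP[/eqP -> /eqP ->]].
  by rewrite mulr1 mulr0 !eqxx.
- by move=> _; apply/ffunP => k; rewrite !ffunE mulVKf.
- by move=> _; apply/ffunP => k; rewrite !ffunE mulKf.
Qed.

Lemma sum_nsols D : {in D, forall k, a k != 0} -> (\sum_g nsols D g)%N = psi F #|D|.
Proof.
move=> a0; rewrite -(card_lin_psi a0) -sum_nat_card.
under eq_bigr do rewrite /nsols -sum_nat_card.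
rewrite exchange_big /=; apply: eq_bigr => x _.
rewrite (bigD1 (\sum_k x k)) //= eqxx [X in (_ + X)%N]big1 ?addn0 // => g.
by rewrite eq_sym => /negbTE ->.
Qed.

Lemma nsols0_add_nsols1 D : {in D, forall k, a k != 0} ->
  (nsols D 0%R + #|F|.-1 * nsols D 1%R)%N = psi F #|D|.
Proof.
move=> a0; rewrite -sum_nsols // (bigD1 0) //=; congr (_ + _)%N.
rewrite (eq_bigr (fun=> nsols D 1)) => [|g /nsols_scale //].
by rewrite sum_nat_const cardC1.
Qed.

Lemma nsols_const D al g : {in D, forall k, a k = al} -> al != 0 -> g != 0 ->
  nsols D g = 0%N.
Proof.
move=> aD al0 g0; apply/eqP; rewrite cards_eq0; apply/eqP/setP => x; rewrite !inE.
apply/negbTE/andP => -[xD /andP[/eqP sx]].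
by rewrite (sum_has_support_const xD aD) sx mulf_eq0 (negbTE al0) (negbTE g0).
Qed.

End Systems.

(* The recursion of [Arev] continued down to the empty list, where the value 1
   counts the solutions with empty support. *)
Fixpoint Arev_ext (F : finFieldType) (s : seq nat) : int :=
  if s is x :: s' then (psi F (sumn s'))%:Z * (phi F x)%:Z + (-1) ^+ x * Arev_ext F s'
  else 1.

Lemma psi0 (F : finFieldType) : psi F 0 = 1%N.
Proof.
rewrite /psi (_ : [set x | _] = setT) ?cardsT ?card_ffun ?card_ord //.
by apply/setP => x; rewrite !inE big_ord0 eqxx; apply/forallP => -[].
Qed.

Lemma Arev_extE (F : finFieldType) s : s != [::] -> Arev F s = Arev_ext F s.
Proof.
elim: s => [// | x [| y s] IH] _; first by rewrite /= psi0 mul1r mulr1 psi_phi.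
by rewrite /Arev -/(Arev F (y :: s)) IH.
Qed.

Section Blocks.
Variable r : seq nat.

Definition blocks_before l := [set k : unk r | (tag k < l)%N].
Definition block l := [set k : unk r | val (tag k) == l].

Lemma blocks_beforeS l : blocks_before l.+1 = blocks_before l :|: block l.
Proof. by apply/setP => k; rewrite !inE ltnS leq_eqVlt orbC. Qed.

Lemma disjoint_blocks_before l : [disjoint blocks_before l & block l].
Proof. by apply/pred0P => k /=; rewrite !inE; apply/andP => -[+ /eqP kl]; rewrite kl ltnn. Qed.

Lemma blocks_before_size : blocks_before (size r) = setT.
Proof. by apply/setP => k; rewrite !inE ltn_ord. Qed.

Lemma card_block l : (l < size r)%N -> #|block l| = nth 0%N r l.
Proof.
move=> lr; pose i := Ordinal lr.
have -> : block l = [set unk_at j | j : 'I_(nth 0%N r i)].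
  apply/setP => -[i' j]; rewrite !inE; apply/idP/imsetP => [/eqP i'l | [j' _ ->] //].
  have i'i : i' = i by apply: val_inj.
  by subst i'; exists j.
rewrite card_imset ?card_ord // => j1 j2 /eqP.
by rewrite /unk_at eq_Tagged => /eqP.
Qed.

Lemma card_blocks_before l : (l <= size r)%N -> #|blocks_before l| = sumn (take l r).
Proof.
elim: l => [_ | l IH lr].
  by rewrite take0; apply/eqP; rewrite cards_eq0; apply/eqP/setP => k; rewrite !inE.
rewrite blocks_beforeS cardsU (disjoint_setI0 (disjoint_blocks_before l)) cards0 subn0.
by rewrite IH ?(ltnW lr) // card_block // (take_nth 0%N lr) sumn_rcons.
Qed.

Lemma sum_unk (V : nmodType) (G : unk r -> V) :
  \sum_(i < size r) \sum_(j < nth 0%N r i) G (unk_at j) = \sum_k G k.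
Proof.
pose G' (i : 'I_(size r)) (j : 'I_(nth 0%N r i)) := G (unk_at j).
rewrite (sig_big_dep xpredT (fun=> xpredT) G').
by apply: eq_bigr => -[].
Qed.

End Blocks.

Section Solutions.
Variables (F : finFieldType) (r : seq nat) (alpha : 'I_(size r) -> F).
Local Notation a := (fun k : unk r => alpha (tag k)).

Lemma card_sols g : #|sols alpha g| = nsols a setT g.
Proof.
apply: eq_card => x; rewrite !inE has_supportT sum_unk.
under [\sum_(i < size r) alpha i * _]eq_bigr do rewrite mulr_sumr.
by rewrite (sum_unk (fun k => alpha (tag k) * x k)) andbA andbC.
Qed.

Lemma nsols_blocks_before l : injective alpha -> (l <= size r)%N ->
  (nsols a (blocks_before r l) 0)%:Z = Arev_ext F (rev (take l r)).
Proof.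
move=> alpha_inj; elim: l => [_ | l IH lr].
  have -> : blocks_before r 0 = set0 by apply/setP => k; rewrite !inE.
  by rewrite take0 nsols_set0.
rewrite blocks_beforeS (nsols_setU (al := alpha (Ordinal lr))) ?disjoint_blocks_before //.
- rewrite IH ?(ltnW lr) // (take_nth 0%N lr) rev_rcons /= sumn_rev.
  by rewrite card_block // card_blocks_before ?(ltnW lr).
- by move=> k; rewrite inE => /eqP kl; congr alpha; apply: val_inj.
- move=> k; rewrite inE => kl; rewrite (inj_eq alpha_inj); apply/eqP => tag_k.
  by move: kl; rewrite tag_k ltnn.
Qed.

Lemma nsolsT0 : injective alpha -> (0 < size r)%N -> (nsols a setT 0)%:Z = A F r.
Proof.
move=> alpha_inj r_gt0; rewrite -blocks_before_size nsols_blocks_before // take_size.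
by rewrite /A Arev_extE // -size_eq0 size_rev -lt0n.
Qed.

Lemma nsolsT0_add_nsolsT1 : (forall i, alpha i != 0) ->
  (nsols a setT 0%R + #|F|.-1 * nsols a setT 1%R)%N = psi F (sumn r).
Proof.
move=> alpha_neq0; rewrite nsols0_add_nsols1 => [|k _]; last exact: alpha_neq0.
by rewrite -blocks_before_size card_blocks_before // take_size.
Qed.

Lemma nsolsT_single_block g : size r = 1%N -> (forall i, alpha i != 0) -> g != 0 ->
  nsols a setT g = 0%N.
Proof.
move=> r1 alpha_neq0 g0; have r_gt0 : (0 < size r)%N by rewrite r1.
apply: (@nsols_const _ _ _ _ (alpha (Ordinal r_gt0))) => // k _; congr alpha.
by apply/val_inj/eqP; rewrite /= -leqn0 -ltnS -[X in (_ < X)%N]r1 ltn_ord.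
Qed.

End Solutions.

Unset Implicit Arguments.

Theorem proposition2p2 (F : finFieldType) (r : seq nat)
    (alpha : 'I_(size r) -> F) (gamma : F) :
  (0 < size r)%N ->
  (forall i : 'I_(size r), (1 <= nth 0%N r i)%N) ->
  injective alpha ->
  (forall i, alpha i != 0) ->
  (size r = 1%N ->
     (#|sols alpha gamma|%:Q =
        if gamma == 0 then (A F r)%:~R else 0)) /\
  ((1 < size r)%N ->
     (#|sols alpha gamma|%:Q =
        if gamma == 0 then (A F r)%:~R
        else ((psi F (sumn r))%:Q - (A F r)%:~R) / (#|F|%:Q - 1))).
Proof.
(* The blocks need not be nonempty: with r_i = 0 the recursion still holds. *)
move=> r_gt0 _ alpha_inj alpha_neq0; rewrite card_sols.
have [-> | g0] := eqVneq gamma 0; first by split => _; rewrite -(nsolsT0 alpha_inj r_gt0).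
split => [r1 | _]; first by rewrite nsolsT_single_block.
have q1 : #|F|%:R - 1 = #|F|.-1%:R :> rat by rewrite -subn1 natrB // ltnW ?card_finNzRing_gt1.
rewrite (nsols_scale _ _ g0) -(nsolsT0 alpha_inj r_gt0) -(nsolsT0_add_nsolsT1 alpha_neq0).
rewrite -!pmulrn natrD natrM q1; field.
by rewrite pnatr_eq0 -lt0n -subn1 subn_gt0 card_finNzRing_gt1.
Qed.
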